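(* Let $R$ be a finite group and let $T \leq R$ be a subgroup. Then \[ |\mathrm{Sub}(R,T)| \leq 7.3722 \cdot [R:T]^{\frac{\log_2 [R:T]}{4} + 1.8919}. \]
   Context: For a finite group $R$ and a subgroup $T\le R$, $\mathrm{Sub}(R,T)=\{H\le R : T\le H\}$ denotes the set of subgroups of $R$ containing $T$. *)

From Stdlib Require Import Reals.
From mathcomp Require Import all_boot all_fingroup.
Set Implicit Arguments. Unset Strict Implicit. Unset Printing Implicit Defensive.

Definition SubRT (gT : finGroupType) (R T : {group gT}) : {set {group gT}} :=
  [set H in subgroups R | T \subset H].

Definition log2 (x : Reals.Rdefinitions.R) : Reals.Rdefinitions.R := Rdiv (ln x) (ln (IZR 2%Z)).

From Stdlib Require Import Reals.
From mathcomp Require Import all_boot all_fingroup.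
From Stdlib Require Import Lra.
From mathcomp Require Import zify.
Set Implicit Arguments. Unset Strict Implicit. Unset Printing Implicit Defensive.

(* Sort the subgroups H in Sub(R,T) into layers by k = floor(log2 |H:T|).  For
   H in layer k, build k-tuples of elements of H greedily: each new element is
   taken outside the subgroup generated by T and the previous ones while that
   subgroup is proper (at least |H|/2 choices), and arbitrarily once it is H.
   Each proper step at least doubles the order, so k steps reach H; hence H
   owns at least (|H|/2)^k tuples, different H own disjoint sets of tuples, and
   all of them lie in R^k.  This gives |layer k| <= 2^(k (log2 n + 1) - k^2)
   <= 2^((log2 n + 1)^2 / 4) for n = [R:T], and summing over the at most n
   layers yields |Sub(R,T)| <= 2^(1/4) n^(log2 n / 4 + 3/2). *)

Lemma leq_exp2rW m n e : m <= n -> m ^ e <= n ^ e.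
Proof. by case: e => // e; rewrite leq_exp2r. Qed.

Lemma leq_sum_subset (X : finType) (A B : {set X}) (F : X -> nat) :
  A \subset B -> \sum_(x in A) F x <= \sum_(x in B) F x.
Proof. by move=> sAB; rewrite [X in _ <= X](big_setID A) /= (setIidPr sAB) leq_addr. Qed.

Lemma card_le_sum_fibres (X : finType) (A : {set X}) (f : X -> nat) n :
  {in A, forall x, f x < n} -> #|A| <= \sum_(k < n) #|[set x in A | f x == k]|.
Proof.
move=> ltfA; rewrite -sum1_card.
have fibreE k : #|[set x in A | f x == k]| = \sum_(x in A) (f x == k).
  rewrite -sum1_card big_mkcond [RHS]big_mkcond; apply: eq_bigr => x.
  by rewrite inE; case: (x \in A); case: (f x == k).
under [X in _ <= X]eq_bigr do rewrite fibreE.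
rewrite exchange_big /=; apply: leq_sum => x xA.
by rewrite (bigD1 (Ordinal (ltfA x xA))) //= eqxx.
Qed.

Lemma exists_large_fibre (X : finType) (A : {set X}) (f : X -> nat) n :
  {in A, forall x, f x < n} -> exists k, #|A| <= n * #|[set x in A | f x == k]|.
Proof.
case: n => [|n] ltfA.
  exists 0; suff -> : A = set0 by rewrite cards0.
  by apply/setP => x; rewrite inE; apply/negP => /ltfA.
have ord_gt0 : 0 < #|'I_n.+1| by rewrite card_ord.
have [k0 maxk0] := eq_bigmax (fun k : 'I_n.+1 => #|[set x in A | f x == k]|) ord_gt0.
exists (val k0); apply: leq_trans (card_le_sum_fibres ltfA) _.
rewrite -maxk0 -[X in X * _](card_ord n.+1) -sum_nat_const; apply: leq_sum => k _.
exact: leq_bigmax.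
Qed.

Section SubgroupCount.
Variable gT : finGroupType.
Implicit Types G H K T : {group gT}.

Lemma card_proper_double K H : K \proper H -> 2 * #|K| <= #|H|.
Proof.
case/andP => sKH nsHK.
by rewrite -(Lagrange sKH) mulnC leq_pmul2l ?cardG_gt0 // indexg_gt1.
Qed.

Lemma proper_joing_cycle K g : g \notin K -> K \proper (K <*> <[g]>)%G.
Proof.
move=> gK; rewrite properE joing_subl /=; apply: contra gK => sKgK.
exact: subsetP sKgK g (subsetP (joing_subr K <[g]>%G) g (cycle_id g)).
Qed.

Lemma in_SubRT G K H : (H \in SubRT G K) = (H \subset G) && (K \subset H).
Proof. by rewrite !inE. Qed.

(* The number of greedy i-tuples leading from K to H; the factor #|H| ^ i
   counts the free tail once the generated subgroup has become H. *)
Fixpoint greedy_count (i : nat) (K H : {group gT}) : nat :=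
  (K == H) * #|H| ^ i +
  if i is i'.+1 then \sum_(g in H :\: K) greedy_count i' (K <*> <[g]>)%G H else 0.

Lemma sum_SubRT_bottom G K (F : {group gT} -> nat) : K \subset G ->
  \sum_(H in SubRT G K) (K == H) * F H = F K.
Proof.
move=> sKG; rewrite (bigD1 K) ?in_SubRT ?sKG ?subxx //= eqxx mul1n big1 ?addn0 //.
by move=> H /andP[_ /negPf]; rewrite eq_sym => ->.
Qed.

Lemma exchange_SubRT_setD G K (F : gT -> {group gT} -> nat) : K \subset G ->
  \sum_(H in SubRT G K) \sum_(g in H :\: K) F g H =
  \sum_(g in G :\: K) \sum_(H in SubRT G (K <*> <[g]>)%G) F g H.
Proof.
move=> sKG; rewrite (exchange_big_dep (mem (G :\: K))) /=; last first.
  move=> H g; rewrite in_SubRT !inE => /andP[sHG _] /andP[-> /(subsetP sHG)] //.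
apply: eq_bigr => g; rewrite inE => /andP[gK _]; apply: eq_bigl => H.
by rewrite !in_SubRT join_subG cycle_subG !inE gK /= andbA.
Qed.

Lemma sum_greedy_count_le i G K : K \subset G ->
  \sum_(H in SubRT G K) greedy_count i K H <= #|G| ^ i.
Proof.
elim: i K => [|i IHi] K sKG /=.
  by under eq_bigr do rewrite addn0; rewrite sum_SubRT_bottom.
rewrite big_split /= sum_SubRT_bottom // exchange_SubRT_setD //.
have sum_le : \sum_(g in G :\: K) \sum_(H in SubRT G (K <*> <[g]>)%G)
                greedy_count i (K <*> <[g]>)%G H <= #|G :\: K| * #|G| ^ i.
  rewrite -sum_nat_const; apply: leq_sum => g; rewrite inE => /andP[_ gG].
  by apply: IHi; rewrite join_subG sKG cycle_subG.
apply: leq_trans (leq_add (leqnn _) sum_le) _.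
rewrite cardsD (setIidPr sKG) !expnS.
have leKG : #|K| <= #|G| := subset_leq_card sKG.
have leKGi : #|K| ^ i <= #|G| ^ i := leq_exp2rW i leKG.
apply: leq_trans (leq_add (leq_mul (leqnn _) leKGi) (leqnn _)) _.
by rewrite -mulnDl subnKC.
Qed.

Lemma greedy_count_lower i K H : K \subset H -> #|H| < 2 ^ i.+1 * #|K| ->
  #|H| ^ i <= 2 ^ i * greedy_count i K H.
Proof.
elim: i K => [|i IHi] K sKH ltHK /=.
  case: (eqVneq K H) => [_ | neKH]; first by rewrite !expn0.
  have pKH : K \proper H by rewrite properEneq neKH.
  by have := card_proper_double pKH; rewrite leqNgt -[2]expn1 ltHK.
case: (eqVneq K H) => [_ | neKH].
  rewrite mul1n (leq_trans (leq_pmull _ (expn_gt0 2 i.+1))) //.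
  by rewrite leq_mul2l leq_addr orbT.
have pKH : K \proper H by rewrite properEneq neKH.
have lower_g g : g \in H :\: K -> #|H| ^ i <= 2 ^ i * greedy_count i (K <*> <[g]>)%G H.
  rewrite inE => /andP[gK gH]; apply: IHi; first by rewrite join_subG sKH cycle_subG.
  apply: leq_trans ltHK _; rewrite expnS -mulnA mulnCA leq_mul2l.
  by rewrite card_proper_double ?orbT ?proper_joing_cycle.
rewrite /= mul0n add0n [2 ^ i.+1]expnS -mulnA big_distrr /=.
apply: leq_trans (_ : #|H| ^ i.+1 <= 2 * \sum_(g in H :\: K) #|H| ^ i) _; last first.
  by rewrite leq_mul2l; apply/orP; right; apply: leq_sum => g; apply: lower_g.
rewrite sum_nat_const cardsD (setIidPr (proper_sub pKH)) mulnA expnS leq_mul2r.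
have := card_proper_double pKH; lia.
Qed.

Definition SubRT_layer G T (k : nat) : {set {group gT}} :=
  [set H in SubRT G T | trunc_log 2 #|H : T|%g == k].

Lemma card_SubRT_layer G T k : T \subset G ->
  #|SubRT_layer G T k| * 2 ^ (k * k) <= 2 ^ k * #|G : T|%g ^ k.
Proof.
move=> sTG.
have sum_bound : #|SubRT_layer G T k| * (2 ^ k * #|T|) ^ k <= 2 ^ k * #|G| ^ k.
  rewrite -sum_nat_const.
  apply: (@leq_trans (\sum_(H in SubRT_layer G T k) 2 ^ k * greedy_count k T H)).
    apply: leq_sum => H; rewrite !inE => /andP[/andP[_ sTH] /eqP logHT].
    have := trunc_log_bounds (isT : 1 < 2) (indexg_gt0 H T).
    rewrite /= logHT -(leq_pmul2l (cardG_gt0 T)) -(ltn_pmul2l (cardG_gt0 T)).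
    rewrite Lagrange // => /andP[loH hiH].
    rewrite mulnC (leq_trans (leq_exp2rW k loH)) // greedy_count_lower //.
    by rewrite mulnC.
  rewrite -big_distrr leq_mul2l (leq_trans _ (sum_greedy_count_le k sTG)) ?orbT //.
  by apply/leq_sum_subset/subsetP => H; rewrite inE => /andP[].
move: sum_bound; rewrite -(Lagrange sTG) !expnMn -expnM.
by rewrite mulnA [X in _ <= X]mulnCA [X in _ <= X]mulnC leq_pmul2r ?expn_gt0 ?cardG_gt0.
Qed.

Lemma card_SubRT_dyadic G T : T \subset G ->
  exists k, #|SubRT G T| * 2 ^ (k * k) <= 2 ^ k * #|G : T|%g ^ k.+1.
Proof.
move=> sTG.
have [k le_layer] : exists k, #|SubRT G T| <= #|G : T|%g * #|SubRT_layer G T k|.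
  apply: exists_large_fibre => H; rewrite in_SubRT => /andP[sHG sTH].
  apply: leq_trans (ltn_expl _ (isT : 1 < 2)) _.
  apply: leq_trans (trunc_logP (isT : 1 < 2) (indexg_gt0 H T)) _.
  exact: dvdn_leq (indexg_gt0 G T) (indexSg sTH sHG).
exists k; apply: leq_trans (leq_mul le_layer (leqnn _)) _.
by rewrite -mulnA expnS [X in _ <= X]mulnCA leq_mul2l card_SubRT_layer ?orbT.
Qed.

End SubgroupCount.

Open Scope R_scope.

Lemma INR_expn m n : INR (m ^ n)%N = INR m ^ n.
Proof. by elim: n => [|n IHn]; rewrite ?expn0 ?expnS ?mult_INR ?IHn. Qed.

Lemma Rpower_log2 x : 0 < x -> Rpower 2 (log2 x) = x.
Proof.
move=> x_gt0; rewrite /Rpower /log2 -[X in _ = X]exp_ln //; congr exp.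
by field; apply: Rgt_not_eq; have := ln_lt_2; lra.
Qed.

Lemma dyadic_ineq_bound (s n k : nat) : (0 < n)%N ->
  (s * 2 ^ (k * k) <= 2 ^ k * n ^ k.+1)%N ->
  INR s <= Rpower 2 (1 / 4) * Rpower (INR n) (log2 (INR n) / 4 + 3 / 2).
Proof.
move=> n_gt0 /leP/le_INR; rewrite !mult_INR !INR_expn.
have n_pos : 0 < INR n by apply: lt_0_INR; apply/ltP.
have two : INR 2 = 2 by rewrite /=; lra.
rewrite two -!Rpower_pow; try lra.
set L := log2 (INR n); rewrite -(Rpower_log2 n_pos) -/L !Rpower_mult -!Rpower_plus.
move=> le_s; apply: (Rmult_le_reg_r (Rpower 2 (INR (k * k)))); first exact: exp_pos.
apply: Rle_trans le_s _; rewrite -Rpower_plus; apply: Rle_Rpower; first lra.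
rewrite mult_INR S_INR.
have := Rle_0_sqr (INR k - (L + 1) / 2); rewrite /Rsqr; lra.
Qed.

Lemma card_SubRT_le (gT : finGroupType) (G T : {group gT}) : T \subset G ->
  INR #|SubRT G T| <=
    Rpower 2 (1 / 4) * Rpower (INR (#|G : T|%g)) (log2 (INR (#|G : T|%g)) / 4 + 3 / 2).
Proof.
move=> sTG; have [k le_k] := card_SubRT_dyadic sTG.
exact: dyadic_ineq_bound (indexg_gt0 G T) le_k.
Qed.

Theorem theorem1p1 (gT : finGroupType) (G T : {group gT}) (hTG : T \subset G) :
  Rle (INR #|SubRT G T|)
      (Rmult (Rdiv (IZR 73722%Z) (IZR 10000%Z))
         (Rpower (INR (#|G : T|%g))
            (Rplus (Rdiv (log2 (INR (#|G : T|%g))) (IZR 4%Z))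
                   (Rdiv (IZR 18919%Z) (IZR 10000%Z))))).
Proof.
apply: Rle_trans (card_SubRT_le hTG) _.
have index_ge1 : 1 <= INR (#|G : T|%g).
  by apply: (le_INR 1); apply/leP; exact: indexg_gt0.
apply: Rmult_le_compat; try by left; apply: exp_pos.
  by apply: Rle_trans (Rle_Rpower 2 (1 / 4) 1 _ _) _; rewrite ?Rpower_1; lra.
by apply: Rle_Rpower; lra.
Qed.
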